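(* Let $\Lambda$ be an Artin algebra and $0\to A\xrightarrow{g}B\xrightarrow{f}C\to0$ a non-split exact sequence in $\mathrm{mod}\,\Lambda$ with $B$ projective and injective. Then the following are equivalent: (1) $A$ is indecomposable and $g$ is left minimal; (2) $C$ is indecomposable and $f$ is right minimal.
   Context: $\mathrm{mod}\,\Lambda$ is the category of finitely generated left $\Lambda$-modules. A morphism $g:A\to B$ is left minimal if every endomorphism $h:B\to B$ with $hg=g$ is an automorphism; dually, $f:B\to C$ is right minimal if every endomorphism $h:B\to B$ with $fh=f$ is an automorphism. *)

From HB Require Import structures.
From mathcomp Require Import all_boot all_order all_algebra.
Set Implicit Arguments. Unset Strict Implicit. Unset Printing Implicit Defensive.
Import GRing.Theory.
Local Open Scope ring_scope.

Definition is_ideal (R : comPzRingType) (I : R -> Prop) : Prop :=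
  I 0 /\ (forall x y, I x -> I y -> I (x + y)) /\ (forall a x, I x -> I (a * x)).

Definition artinian_ring (R : comPzRingType) : Prop :=
  forall I : nat -> (R -> Prop),
    (forall n, is_ideal (I n)) ->
    (forall n x, I n.+1 x -> I n x) ->
    exists N, forall n, (N <= n)%N -> forall x, I n x <-> I N x.

Definition artin_algebra (L : pzRingType) : Prop :=
  exists (R : comPzRingType) (phi : {rmorphism R -> L}),
    artinian_ring R /\
    (forall r x, phi r * x = x * phi r) /\
    exists n (s : 'I_n -> L), forall x : L,
      exists c : 'I_n -> R, x = \sum_(i < n) phi (c i) * s i.

Definition fin_gen (L : pzRingType) (M : lmodType L) : Prop :=
  exists n (s : 'I_n -> M), forall x : M,
    exists c : 'I_n -> L, x = \sum_(i < n) c i *: s i.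

Definition projective_mod (L : pzRingType) (P : lmodType L) : Prop :=
  forall (M N : lmodType L), fin_gen M -> fin_gen N ->
  forall (p : {linear M -> N}) (h : {linear P -> N}),
    (forall y, exists x, p x = y) -> exists h' : {linear P -> M}, forall x, p (h' x) = h x.

Definition injective_mod (L : pzRingType) (I : lmodType L) : Prop :=
  forall (M N : lmodType L), fin_gen M -> fin_gen N ->
  forall (i : {linear M -> N}) (h : {linear M -> I}),
    injective i -> exists h' : {linear N -> I}, forall x, h' (i x) = h x.

Definition submodule (L : pzRingType) (M : lmodType L) (U : M -> Prop) : Prop :=
  U 0 /\ forall (a : L) x y, U x -> U y -> U (a *: x + y).

Definition indecomposable (L : pzRingType) (M : lmodType L) : Prop :=
  (exists x : M, x != 0) /\
  forall U V : M -> Prop, submodule U -> submodule V ->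
    (forall x, U x -> V x -> x = 0) ->
    (forall x, exists u v, U u /\ V v /\ x = u + v) ->
    (forall x, U x -> x = 0) \/ (forall x, V x -> x = 0).

Definition left_minimal (L : pzRingType) (A B : lmodType L) (g : {linear A -> B}) : Prop :=
  forall h : {linear B -> B}, (forall x, h (g x) = g x) -> bijective h.

Definition right_minimal (L : pzRingType) (B C : lmodType L) (f : {linear B -> C}) : Prop :=
  forall h : {linear B -> B}, (forall x, f (h x) = f x) -> bijective h.

Definition short_exact (L : pzRingType) (A B C : lmodType L)
  (g : {linear A -> B}) (f : {linear B -> C}) : Prop :=
  injective g /\ (forall z, exists y, f y = z) /\
  (forall y, f y = 0 <-> exists x, g x = y).

Definition splits (L : pzRingType) (A B C : lmodType L)
  (g : {linear A -> B}) (f : {linear B -> C}) : Prop :=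
  exists r : {linear B -> A}, forall x, r (g x) = x.

From HB Require Import structures.
From mathcomp Require Import all_boot all_order all_algebra.
From Stdlib Require Import ClassicalEpsilon Classical.
Set Implicit Arguments. Unset Strict Implicit. Unset Printing Implicit Defensive.
Import GRing.Theory.
Local Open Scope ring_scope.

(* Since B is projective and injective, endomorphisms of A extend to B and
   endomorphisms of C lift to B. Let e be an endomorphism of B with
   e (im g) <= im g. If A is indecomposable, Fitting's lemma makes End A local,
   so the restriction of e or of 1 - e to A is invertible, and left minimality
   of g makes e or 1 - e invertible; dually when C is indecomposable and f is
   right minimal. For h with f h = f (resp. h g = g), invertibility of 1 - h
   would force C = 0 (resp. A = 0), hence a splitting; for a lift of a
   projection of C (resp. an extension of a projection of A) onto a direct
   summand, invertibility of e or 1 - e makes the complementary summand zero.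
   Fitting's lemma itself comes from the descending chain of images of ph^n,
   finitely generated over the artinian centre, and the determinant trick. *)

Definition linear_of (L : pzRingType) (M N : lmodType L) (f : M -> N)
  (fL : linear f) : {linear M -> N} :=
  HB.pack f (GRing.isLinear.Build L M N _ f fL).

Lemma bijective_of_inj_surj (T U : Type) (h : T -> U) :
  injective h -> (forall y, exists x, h x = y) -> bijective h.
Proof.
move=> h_inj h_surj.
pose h' y := proj1_sig (constructive_indefinite_description _ (h_surj y)).
have h'K y : h (h' y) = y by rewrite /h'; case: constructive_indefinite_description.
by exists h' => [x|y]; [apply: h_inj; rewrite h'K | exact: h'K].
Qed.

Lemma bijective_of_comp (T U : Type) (h : T -> U) (v : U -> T) :
  bijective (h \o v) -> bijective (v \o h) -> bijective h.
Proof.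
move=> [w _ hvwK] [u uvhK _]; apply: bijective_of_inj_surj.
  by move=> x y hxy; rewrite -(uvhK x) -(uvhK y) /= hxy.
by move=> y; exists (v (w y)); exact: hvwK.
Qed.

Lemma linear_inverse (L : pzRingType) (M N : lmodType L) (f : {linear M -> N}) :
  bijective f -> exists f' : {linear N -> M}, cancel f f' /\ cancel f' f.
Proof. by move=> [f' fK f'K]; exists (linear_of (can2_linear fK f'K)). Qed.

Section IterLinear.
Variables (L : pzRingType) (M : lmodType L) (ph : {linear M -> M}) (n : nat).

Fact iter_is_linear : linear (iter n ph).
Proof. by elim: n => // m IH a x y; rewrite !iterS IH linearP. Qed.

HB.instance Definition _ :=
  GRing.isLinear.Build L M M *:%R (iter n ph) iter_is_linear.

End IterLinear.

Section RSpan.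
Variables (L : pzRingType) (R : comPzRingType) (phi : {rmorphism R -> L}).
Variable M : lmodType L.
Implicit Types (s : seq M) (U : M -> Prop).

Definition rsubmodule U := U 0 /\ forall r x y, U x -> U y -> U (phi r *: x + y).

Lemma rsubmoduleD U x y : rsubmodule U -> U x -> U y -> U (x + y).
Proof. by move=> [_ UP] Ux Uy; have := UP 1 _ _ Ux Uy; rewrite rmorph1 scale1r. Qed.

Lemma rsubmoduleZ U r x : rsubmodule U -> U x -> U (phi r *: x).
Proof. by move=> [U0 UP] Ux; have := UP r _ _ Ux U0; rewrite addr0. Qed.

Lemma rsubmoduleB U x y : rsubmodule U -> U x -> U y -> U (x - y).
Proof.
move=> subU Ux Uy; apply: rsubmoduleD => //.
by have := rsubmoduleZ (-1) subU Uy; rewrite rmorphN1 scaleN1r.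
Qed.

Lemma rsubmodule_sum U I (r : seq I) (P : pred I) (F : I -> M) :
  rsubmodule U -> (forall i, P i -> U (F i)) -> U (\sum_(i <- r | P i) F i).
Proof.
move=> subU UF; elim/big_rec: _ => [|i y Pi Uy]; first exact: subU.1.
exact: rsubmoduleD (UF i Pi) Uy.
Qed.

Definition rspan s x := exists c : nat -> R, x = \sum_(i < size s) phi (c i) *: s`_i.

Lemma rspan_rsubmodule s : rsubmodule (rspan s).
Proof.
split; first by exists (fun _ => 0); rewrite big1 // => i _; rewrite rmorph0 scale0r.
move=> r _ _ [c ->] [d ->]; exists (fun i => r * c i + d i).
rewrite scaler_sumr -big_split /=; apply: eq_bigr => i _.
by rewrite rmorphD rmorphM scalerDl scalerA.
Qed.

Lemma rspan_nth s i : (i < size s)%N -> rspan s s`_i.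
Proof.
move=> lt_i_s; exists (fun j => (j == i)%:R).
rewrite (bigD1 (Ordinal lt_i_s)) //= eqxx rmorph1 scale1r big1 ?addr0 // => j ji.
have /negbTE-> : nat_of_ord j != i by apply: contra ji => /eqP ji; apply/eqP/val_inj.
by rewrite rmorph0 scale0r.
Qed.

Lemma rspan_mem s x : x \in s -> rspan s x.
Proof. by move=> sx; rewrite -(nth_index 0 sx); apply: rspan_nth; rewrite index_mem. Qed.

Lemma rspan_cons a s x :
  rspan (a :: s) x <-> exists r y, rspan s y /\ x = phi r *: a + y.
Proof.
split=> [[c ->]|[r [_ [[c ->] ->]]]].
  rewrite big_ord_recl /=; exists (c 0%N), (\sum_(i < size s) phi (c i.+1) *: s`_i).
  by split=> //; exists (fun i => c i.+1).
by exists (fun i => if i is j.+1 then c j else r); rewrite big_ord_recl.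
Qed.

Lemma decreasing_chain_le (U : nat -> M -> Prop) :
  (forall n x, U n.+1 x -> U n x) -> forall m n x, (m <= n)%N -> U n x -> U m x.
Proof.
move=> Udec m n x /subnK <-; elim: (n - m)%N => [|k IH] //= Ux.
by apply: IH; apply: Udec; rewrite addSn in Ux.
Qed.

Lemma head_coef_ideal a s U :
  rsubmodule U -> is_ideal (fun r => exists y, rspan s y /\ U (phi r *: a + y)).
Proof.
move=> subU; split; [|split].
- exists 0; split; first exact: (rspan_rsubmodule s).1.
  by rewrite rmorph0 scale0r addr0; exact: subU.1.
- move=> r1 r2 [y1 [sy1 Uy1]] [y2 [sy2 Uy2]]; exists (y1 + y2).
  split; first exact: rsubmoduleD (rspan_rsubmodule s) sy1 sy2.
  by have := rsubmoduleD subU Uy1 Uy2; rewrite rmorphD scalerDl addrACA.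
- move=> b r [y [sy Uy]]; exists (phi b *: y).
  split; first exact: rsubmoduleZ (rspan_rsubmodule s) sy.
  by have := rsubmoduleZ b subU Uy; rewrite scalerDr rmorphM scalerA.
Qed.

(* Induction on the generators: the coefficients of the first generator form a
   decreasing chain of ideals of R, the rest a chain in the span of the tail. *)
Lemma rspan_dcc s : artinian_ring R -> forall U : nat -> M -> Prop,
  (forall n, rsubmodule (U n)) -> (forall n x, U n.+1 x -> U n x) ->
  (forall n x, U n x -> rspan s x) ->
  exists N, forall n, (N <= n)%N -> forall x, U n x <-> U N x.
Proof.
move=> artR; elim: s => [|a s IH] U subU Udec Us.
  exists 0%N => n _ x; split; first exact: decreasing_chain_le.
  by move=> U0x; have [c ->] := Us _ _ U0x; rewrite big_ord0; exact: (subU n).1.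
pose I n r := exists y, rspan s y /\ U n (phi r *: a + y).
have [N1 IN1] : exists N, forall n, (N <= n)%N -> forall r, I n r <-> I N r.
  apply: artR => [n|n r [y [sy Uy]]]; first exact: head_coef_ideal.
  by exists y; split => //; apply: Udec.
pose V n x := U n x /\ rspan s x.
have subV n : rsubmodule (V n).
  split; first by split; [exact: (subU n).1 | exact: (rspan_rsubmodule s).1].
  move=> r x y [Ux sx] [Uy sy].
  by split; [exact: (subU n).2 | exact: (rspan_rsubmodule s).2].
have Vdec n x : V n.+1 x -> V n x by move=> [Ux sx]; split=> //; apply: Udec.
have [N2 VN2] := IH V subV Vdec (fun n x Vx => Vx.2).
pose N := maxn N1 N2; exists N => n le_Nn x; split; first exact: decreasing_chain_le.
move=> UNx; have [r [y [sy def_x]]] := (rspan_cons a s x).1 (Us _ _ UNx).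
have le_N1n : (N1 <= n)%N by apply: leq_trans le_Nn; apply: leq_maxl.
have le_N2n : (N2 <= n)%N by apply: leq_trans le_Nn; apply: leq_maxr.
have [y' [sy' Uny']] : I n r.
  by apply/(IN1 n le_N1n)/(IN1 N (leq_maxl _ _)); exists y; rewrite -def_x.
have Vnyy' : V n (y - y').
  apply/(VN2 n le_N2n)/(VN2 N (leq_maxr _ _)); split.
    have -> : y - y' = x - (phi r *: a + y') by rewrite def_x opprD addrACA subrr add0r.
    by apply: rsubmoduleB => //; exact: decreasing_chain_le le_Nn Uny'.
  exact: rsubmoduleB (rspan_rsubmodule s) sy sy'.
have -> : x = (phi r *: a + y') + (y - y') by rewrite def_x -addrA [y' + _]addrC subrK.
exact: rsubmoduleD (subU n) Uny' Vnyy'.1.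
Qed.

End RSpan.

Section DeterminantTrick.
Variables (L : pzRingType) (R : comNzRingType) (phi : {rmorphism R -> L}).
Variables (M : lmodType L) (ph : {linear M -> M}) (n : nat).
Implicit Types (D : 'M[R]_n.+1) (w : 'I_n.+1 -> M).

Definition mxact D w (i : 'I_n.+1) := \sum_j phi (D i j) *: w j.

Lemma mxact1 w i : mxact 1%:M w i = w i.
Proof.
rewrite /mxact (bigD1 i) //= mxE eqxx rmorph1 scale1r big1 ?addr0 // => j ji.
by rewrite mxE eq_sym (negbTE ji) rmorph0 scale0r.
Qed.

Lemma mxactM D1 D2 w i : mxact (D1 *m D2) w i = mxact D1 (mxact D2 w) i.
Proof.
rewrite /mxact; under eq_bigr do rewrite mxE rmorph_sum scaler_suml.
rewrite exchange_big /=; apply: eq_bigr => k _; rewrite scaler_sumr.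
by apply: eq_bigr => j _; rewrite rmorphM scalerA.
Qed.

Lemma mxact_sum I (r : seq I) (P : pred I) (F : I -> 'M[R]_n.+1) w i :
  mxact (\sum_(k <- r | P k) F k) w i = \sum_(k <- r | P k) mxact (F k) w i.
Proof.
rewrite /mxact exchange_big /=; apply: eq_bigr => j _.
by rewrite summxE rmorph_sum scaler_suml.
Qed.

Lemma mxactZ a D w i : mxact (a *: D) w i = phi a *: mxact D w i.
Proof. by rewrite /mxact scaler_sumr; apply: eq_bigr => j _; rewrite mxE rmorphM scalerA. Qed.

Lemma mxact0 w i : mxact 0 w i = 0.
Proof. by rewrite /mxact big1 // => j _; rewrite mxE rmorph0 scale0r. Qed.

Lemma iter_mxact m D w i : iter m ph (mxact D w i) = mxact D (iter m ph \o w) i.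
Proof. by rewrite /mxact linear_sum; apply: eq_bigr => j _; rewrite linearZ. Qed.

Lemma horner_mx_coef D (p : {poly R}) :
  horner_mx D p = \sum_(i < size p) p`_i *: D ^+ i.
Proof.
rewrite -{1}[p]coefK poly_def linear_sum; apply: eq_bigr => i _.
by rewrite linearZ /= rmorphXn /= horner_mx_X.
Qed.

Variables (w : 'I_n.+1 -> M) (C : 'M[R]_n.+1).
Hypothesis wC : forall i, w i = ph (mxact C w i).

Lemma mxactX_iter k m i : mxact (C ^+ k) (iter (k + m) ph \o w) i = iter m ph (w i).
Proof.
elim: k m i => [|k IH] m i; first by rewrite expr0 mxact1.
rewrite exprSr mxactM -IH; apply: eq_bigr => j _; congr (_ *: _).
by rewrite [RHS]/= wC -iterSr iter_mxact addSn.
Qed.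

Definition char_rev y :=
  \sum_(i < n.+2) phi (char_poly C)`_i *: iter (n.+1 - i) ph y.

Lemma char_rev_gen i : char_rev (w i) = 0.
Proof.
have := mxact0 (iter n.+1 ph \o w) i.
rewrite -(Cayley_Hamilton C) horner_mx_coef size_char_poly mxact_sum => <-.
apply: eq_bigr => k _; rewrite mxactZ; congr (_ *: _).
by have := mxactX_iter k (n.+1 - k) i; rewrite subnKC // -ltnS.
Qed.

Lemma char_revP r y z : char_rev (phi r *: y + z) = phi r *: char_rev y + char_rev z.
Proof.
rewrite /char_rev scaler_sumr -big_split; apply: eq_bigr => i _ /=.
by rewrite linearP scalerDr !scalerA -!rmorphM mulrC.
Qed.

Lemma char_rev_span (r : 'I_n.+1 -> R) : char_rev (\sum_i phi (r i) *: w i) = 0.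
Proof.
elim/big_rec: _ => [|i y _ IH].
  by rewrite /char_rev big1 // => k _; rewrite linear0 scaler0.
by rewrite char_revP char_rev_gen IH scaler0 addr0.
Qed.

(* The constant coefficient of char_rev is 1, and all other terms factor through ph. *)
Lemma mx_determinant_trick (r : 'I_n.+1 -> R) :
  ph (\sum_i phi (r i) *: w i) = 0 -> \sum_i phi (r i) *: w i = 0.
Proof.
set y := \sum_i _ => phy0.
have := char_rev_span r; rewrite -/y /char_rev big_ord_recr /= subnn.
have := char_poly_monic C; rewrite monicE lead_coefE size_char_poly => /eqP->.
rewrite rmorph1 scale1r big1 ?add0r // => i _.
have le_i_n : (i <= n)%N by rewrite -ltnS.
by rewrite subSn // iterSr phy0 linear0 scaler0.
Qed.

End DeterminantTrick.

Lemma nilpotent_subr_bijective (L : pzRingType) (M : lmodType L)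
    (ph : {linear M -> M}) N :
  (forall x, iter N ph x = 0) -> bijective (idfun \- ph).
Proof.
move=> nilN; pose S m x := \sum_(i < m) iter i ph x.
have phS x : ph (S N x) = S N (ph x).
  by rewrite linear_sum; apply: eq_bigr => i _; rewrite -iterS iterSr.
have telescope m x : S m x - S m (ph x) = x - iter m ph x.
  elim: m => [|m IH]; first by rewrite /S !big_ord0 /= !subrr.
  by rewrite /S !big_ord_recr /= opprD addrACA IH -iterSr addrA subrK.
have SB m x y : S m (x - y) = S m x - S m y.
  by rewrite /S -sumrB; apply: eq_bigr => i _; rewrite linearB.
by exists (S N) => x /=; rewrite ?SB ?phS telescope nilN subr0.
Qed.

Section Fitting.
Variables (L : pzRingType) (R : comNzRingType) (phi : {rmorphism R -> L}).
Variables (M : lmodType L) (ph : {linear M -> M}).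

Lemma rspan_surj_inj (W : seq M) :
  (forall i, (i < size W)%N -> exists2 y, rspan phi W y & W`_i = ph y) ->
  forall x, rspan phi W x -> ph x = 0 -> x = 0.
Proof.
move=> Wph x [c ->]; case def_n: (size W) => [|n]; first by rewrite big_ord0.
have {}Wph (i : 'I_n.+1) :
    exists d : nat -> R, W`_i = ph (\sum_(j < n.+1) phi (d j) *: W`_j).
  by have [|y [d ->] ->] := Wph i; [rewrite def_n | exists d; rewrite def_n].
pose d i := proj1_sig (constructive_indefinite_description _ (Wph i)).
have dP (i : 'I_n.+1) : W`_i = ph (\sum_(j < n.+1) phi (d i j) *: W`_j).
  by rewrite /d; case: constructive_indefinite_description.
pose C : 'M[R]_n.+1 := \matrix_(i < n.+1, j < n.+1) d i j.
apply: (@mx_determinant_trick _ _ phi _ ph n (fun j => W`_j) C) => i.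
by rewrite dP /mxact; congr (ph _); apply: eq_bigr => j _; rewrite mxE.
Qed.

Definition iter_image n x := exists y, x = iter n ph y.

Lemma iter_image_rsubmodule n : rsubmodule phi (iter_image n).
Proof.
split; first by exists 0; rewrite linear0.
by move=> r _ _ [x ->] [y ->]; exists (phi r *: x + y); rewrite linearP.
Qed.

Lemma iter_image_submodule n : submodule (iter_image n).
Proof.
split; first by exists 0; rewrite linear0.
by move=> a _ _ [x ->] [y ->]; exists (a *: x + y); rewrite linearP.
Qed.

Lemma iter_imageS n x : iter_image n.+1 x -> iter_image n x.
Proof. by move=> [y ->]; exists (ph y); rewrite iterSr. Qed.

Variables (G : seq M) (spanG : forall x, rspan phi G x).

Lemma iter_image_stationary :
  artinian_ring R -> exists N, forall n, (N <= n)%N ->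
    forall x, iter_image n x <-> iter_image N x.
Proof.
move=> artR; apply: (rspan_dcc artR iter_image_rsubmodule iter_imageS).
by move=> n x _; exact: spanG.
Qed.

Lemma iter_image_rspan N x :
  iter_image N x <-> rspan phi (map (iter N ph) G) x.
Proof.
rewrite /rspan size_map; split=> [[y ->]|[c ->]].
  have [c ->] := spanG y; exists c; rewrite linear_sum.
  by apply: eq_bigr => i _; rewrite linearZ (nth_map 0).
exists (\sum_(i < size G) phi (c i) *: G`_i); rewrite linear_sum.
by apply: eq_bigr => i _; rewrite linearZ (nth_map 0).
Qed.

(* Vasconcelos: ph maps the finitely generated R-module im ph^N onto itself. *)
Lemma stationary_iter_image_inj N :
  (forall x, iter_image N.+1 x <-> iter_image N x) ->
  forall x, iter_image N x -> ph x = 0 -> x = 0.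
Proof.
move=> statN x /iter_image_rspan; apply: rspan_surj_inj => i lt_i_W.
have /statN[y ->] : iter_image N (map (iter N ph) G)`_i.
  by apply/iter_image_rspan; exact: rspan_nth.
by exists (iter N ph y); [apply/iter_image_rspan; exists y | rewrite iterS].
Qed.

(* Fitting: M is the direct sum of the kernel and the image of ph^N. *)
Theorem fitting_local :
  artinian_ring R -> indecomposable M -> bijective ph \/ bijective (idfun \- ph).
Proof.
move=> artR [_ indM]; have [N statN] := iter_image_stationary artR.
have ph_inj := stationary_iter_image_inj (statN N.+1 (leqnSn N)).
have iter_inj m x : iter_image N x -> iter m ph x = 0 -> x = 0.
  elim: m x => [|m IH] x imx; first by [].
  rewrite iterSr => /(IH (ph x)) phx0; apply: ph_inj (imx) (phx0 _).
  by move: imx => [y ->]; exists (ph y); rewrite -iterS iterSr.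
have kernel_image x : exists u v, iter N ph u = 0 /\ iter_image N v /\ x = u + v.
  have [|z ez] := (statN (N + N)%N (leq_addr _ _) (iter N ph x)).2; first by exists x.
  exists (x - iter N ph z), (iter N ph z); split; last by split; [exists z | rewrite subrK].
  by rewrite linearB /= ez iterD subrr.
have ker_submodule : submodule (fun x => iter N ph x = 0).
  split=> [|a x y x0 y0]; first exact: linear0.
  by rewrite linearP /= x0 y0 scaler0 addr0.
have [ker0|im0] := indM _ _ ker_submodule (iter_image_submodule N)
  (fun x x0 imx => iter_inj N x imx x0) kernel_image; [left | right].
  have image_all x : iter_image N x.
    by have [u [v [/ker0-> [imv ->]]]] := kernel_image x; rewrite add0r.
  apply: bijective_of_inj_surj => [x y phxy|y].
    apply/eqP; rewrite -subr_eq0; apply/eqP/ph_inj; first exact: image_all.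
    by rewrite linearB phxy subrr.
  by have [z ->] := (statN N.+1 (leqnSn N) y).2 (image_all y); exists (iter N ph z).
by apply: (nilpotent_subr_bijective (N := N)) => x; apply: im0; exists x.
Qed.

End Fitting.

(* Cayley-Hamilton needs a non-trivial ring; R is one as soon as M <> 0. *)
Section NonTrivialScalars.
Variables (R : comPzRingType) (R_nontrivial : (1 != 0 :> R)).

Definition nz_scalars : Type := R.
HB.instance Definition _ := GRing.ComPzRing.on nz_scalars.
HB.instance Definition _ := GRing.PzSemiRing_isNonZero.Build nz_scalars R_nontrivial.

Lemma fitting_local_pz (L : pzRingType) (phi : {rmorphism R -> L}) (M : lmodType L)
    (G : seq M) (ph : {linear M -> M}) :
  artinian_ring R -> (forall x, rspan phi G x) -> indecomposable M ->
  bijective ph \/ bijective (idfun \- ph).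
Proof.
move=> artR spanG indM.
exact: (@fitting_local L nz_scalars phi M ph G spanG artR indM).
Qed.

End NonTrivialScalars.

Theorem indecomposable_end_local (L : pzRingType) (M : lmodType L)
    (ph : {linear M -> M}) :
  artin_algebra L -> fin_gen M -> indecomposable M ->
  bijective ph \/ bijective (idfun \- ph).
Proof.
move=> [R [phi [artR [_ [m [t t_gen]]]]]] [n [s s_gen]] indM.
pose G := [seq t j *: s i | i <- enum 'I_n, j <- enum 'I_m].
have spanG x : rspan phi G x.
  have [c ->] := s_gen x; apply: rsubmodule_sum (rspan_rsubmodule phi G) _ => i _.
  have [d ->] := t_gen (c i); rewrite scaler_suml.
  apply: rsubmodule_sum (rspan_rsubmodule phi G) _ => j _.
  rewrite -scalerA; apply: rsubmoduleZ (rspan_rsubmodule phi G) _; apply: rspan_mem.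
  by apply: allpairs_f; rewrite mem_enum.
have [R0|R_nontrivial] := eqVneq (1 : R) 0.
  have [x /eqP[]] := indM.1.
  by rewrite -[x]scale1r -(rmorph1 phi) R0 rmorph0 scale0r.
exact: (@fitting_local_pz R R_nontrivial L phi M G ph artR spanG indM).
Qed.

Section Projection.
Variables (L : pzRingType) (M : lmodType L).
Implicit Types (U V : M -> Prop) (p : M -> M).

Lemma submoduleD U x y : submodule U -> U x -> U y -> U (x + y).
Proof. by move=> [_ UP] Ux Uy; have := UP 1 _ _ Ux Uy; rewrite scale1r. Qed.

Lemma submoduleZ U a x : submodule U -> U x -> U (a *: x).
Proof. by move=> [U0 UP] Ux; have := UP a _ _ Ux U0; rewrite addr0. Qed.

Lemma submoduleB U x y : submodule U -> U x -> U y -> U (x - y).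
Proof.
move=> subU Ux Uy; apply: submoduleD => //.
by have := submoduleZ (-1) subU Uy; rewrite scaleN1r.
Qed.

Definition projection U V p := forall x, U (p x) /\ V (x - p x).

Lemma projection_compl U V p : projection U V p -> projection V U (idfun \- p).
Proof.
move=> pP x; split; first exact: (pP x).2.
by rewrite /= opprB addrC subrK; exact: (pP x).1.
Qed.

Lemma exists_projection U V :
  submodule U -> submodule V -> (forall x, U x -> V x -> x = 0) ->
  (forall x, exists u v, U u /\ V v /\ x = u + v) ->
  exists p : {linear M -> M}, projection U V p.
Proof.
move=> subU subV UV0 UV_span.
have {}UV_span x : exists u, U u /\ V (x - u).
  by have [u [v [Uu [Vv ->]]]] := UV_span x; exists u; rewrite addrC addKr.
pose p x := proj1_sig (constructive_indefinite_description _ (UV_span x)).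
have pP : projection U V p.
  by move=> x; rewrite /p; case: constructive_indefinite_description.
suff p_linear : linear p by exists (linear_of p_linear).
(* The defect of linearity lies both in U and in V. *)
move=> a x y; apply/eqP; rewrite -subr_eq0; apply/eqP/UV0.
  apply: submoduleB (pP _).1 _ => //.
  by apply: submoduleD (submoduleZ _ _ (pP _).1) (pP _).1.
have -> : p (a *: x + y) - (a *: p x + p y) =
    (a *: (x - p x) + (y - p y)) - (a *: x + y - p (a *: x + y)).
  by rewrite scalerBr addrACA -opprD opprB [RHS]addrC addrA subrK.
apply: submoduleB (pP _).2 => //.
by apply: submoduleD (submoduleZ _ _ (pP _).2) (pP _).2.
Qed.

Lemma projection_surj_trivial U V p :
  (forall x, U x -> V x -> x = 0) -> projection U V p ->
  (forall y, exists x, p x = y) -> forall x, V x -> x = 0.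
Proof.
move=> UV0 pP p_surj y; have [x <-] := p_surj y.
exact: UV0 (pP x).1.
Qed.

Lemma projection_inj_trivial U V (p : {linear M -> M}) :
  submodule V -> (forall x, U x -> V x -> x = 0) -> projection U V p ->
  injective p -> forall x, V x -> x = 0.
Proof.
move=> subV UV0 pP p_inj x Vx; apply: p_inj; rewrite linear0.
apply: UV0 (pP x).1 _; have -> : p x = x - (x - p x) by rewrite opprB addrC subrK.
exact: submoduleB subV Vx (pP x).2.
Qed.

End Projection.

Section ShortExactSequence.
Variables (L : pzRingType) (A B C : lmodType L).
Variables (g : {linear A -> B}) (f : {linear B -> C}).
Hypothesis gf_exact : short_exact g f.

Lemma short_exact_comp a : f (g a) = 0.
Proof. by apply/(gf_exact.2.2 (g a)).2; exists a. Qed.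

Lemma factor_through_kernel (X : lmodType L) (u : {linear X -> B}) :
  (forall x, f (u x) = 0) -> exists k : {linear X -> A}, forall x, g (k x) = u x.
Proof.
move=> fu0; have ex_k x := (gf_exact.2.2 (u x)).1 (fu0 x).
pose k x := proj1_sig (constructive_indefinite_description _ (ex_k x)).
have gk x : g (k x) = u x by rewrite /k; case: constructive_indefinite_description.
suff k_linear : linear k by exists (linear_of k_linear).
by move=> a x y; apply: gf_exact.1; rewrite linearP !gk linearP.
Qed.

Lemma factor_through_cokernel (Y : lmodType L) (u : {linear B -> Y}) :
  (forall a, u (g a) = 0) -> exists k : {linear C -> Y}, forall b, k (f b) = u b.
Proof.
move=> ug0; pose s z := proj1_sig (constructive_indefinite_description _ (gf_exact.2.1 z)).
have fs z : f (s z) = z by rewrite /s; case: constructive_indefinite_description.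
have u_fiber b b' : f b = f b' -> u b = u b'.
  move=> fbb'; have /(gf_exact.2.2 _).1[a gab] : f (b - b') = 0 by rewrite linearB fbb' subrr.
  by apply/eqP; rewrite -subr_eq0 -linearB -gab ug0.
suff us_linear : linear (u \o s) by exists (linear_of us_linear) => b; apply: u_fiber.
by move=> a z z'; rewrite /= -linearP; apply: u_fiber; rewrite linearP !fs.
Qed.

Hypothesis gf_nonsplit : ~ splits g f.

Lemma nonsplit_source_neq0 : exists a : A, a != 0.
Proof.
apply: NNPP => A0; apply: gf_nonsplit; exists \0 => a /=.
by apply/esym/eqP; apply: contra_notT A0 => na; exists a.
Qed.

Lemma nonsplit_target_neq0 : exists z : C, z != 0.
Proof.
apply: NNPP => C0; apply: gf_nonsplit.
have [|r gr] := factor_through_kernel (u := idfun : {linear B -> B}).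
  by move=> b; apply/eqP; apply: contra_notT C0 => nb; exists (f b).
by exists r => a; apply: gf_exact.1; rewrite gr.
Qed.

Hypotheses (fgA : fin_gen A) (fgB : fin_gen B) (fgC : fin_gen C).

Lemma extend_along_g (ph : {linear A -> A}) :
  injective_mod B -> exists e : {linear B -> B}, forall a, e (g a) = g (ph a).
Proof. by move=> IB; exact: IB fgA fgB g (g \o ph) gf_exact.1. Qed.

Lemma lift_along_f (ps : {linear C -> C}) :
  projective_mod B -> exists e : {linear B -> B}, forall b, f (e b) = ps (f b).
Proof. by move=> PB; exact: PB fgB fgC f (ps \o f) gf_exact.2.1. Qed.

(* Extending the inverse of ph gives a two-sided inverse of e up to
   automorphisms fixing g. *)
Lemma extension_bijective (e : {linear B -> B}) (ph : {linear A -> A}) :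
  injective_mod B -> left_minimal g ->
  (forall a, e (g a) = g (ph a)) -> bijective ph -> bijective e.
Proof.
move=> IB gmin eg /linear_inverse[ph' [phK ph'K]].
have [v vg] := extend_along_g ph' IB.
by apply: (bijective_of_comp (v := v)); apply: gmin => a /=; rewrite ?vg eg ?vg ?phK ?ph'K.
Qed.

Lemma lift_bijective (e : {linear B -> B}) (ps : {linear C -> C}) :
  projective_mod B -> right_minimal f ->
  (forall b, f (e b) = ps (f b)) -> bijective ps -> bijective e.
Proof.
move=> PB fmin fe /linear_inverse[ps' [psK ps'K]].
have [v fv] := lift_along_f ps' PB.
by apply: (bijective_of_comp (v := v)); apply: fmin => b /=; rewrite ?fv fe ?fv ?psK ?ps'K.
Qed.

Lemma stable_end_local_of_left_minimal (e : {linear B -> B}) :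
  artin_algebra L -> injective_mod B -> indecomposable A -> left_minimal g ->
  (forall a, f (e (g a)) = 0) -> bijective e \/ bijective (idfun \- e).
Proof.
move=> artL IB indA gmin e_stable.
have [ph gph] := factor_through_kernel (u := e \o g) e_stable.
have [ph_bij|phc_bij] := indecomposable_end_local ph artL fgA indA; [left|right].
  by apply: extension_bijective IB gmin _ ph_bij => a; rewrite gph.
apply: extension_bijective IB gmin _ phc_bij => a.
by rewrite /= linearB gph.
Qed.

Lemma stable_end_local_of_right_minimal (e : {linear B -> B}) :
  artin_algebra L -> projective_mod B -> indecomposable C -> right_minimal f ->
  (forall a, f (e (g a)) = 0) -> bijective e \/ bijective (idfun \- e).
Proof.
move=> artL PB indC fmin e_stable.
have [ps psf] := factor_through_cokernel (u := f \o e) e_stable.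
have [ps_bij|psc_bij] := indecomposable_end_local ps artL fgC indC; [left|right].
  by apply: lift_bijective PB fmin _ ps_bij => b; rewrite psf.
apply: lift_bijective PB fmin _ psc_bij => b.
by rewrite /= linearB psf.
Qed.

Lemma right_minimal_of_left_minimal :
  artin_algebra L -> injective_mod B -> indecomposable A -> left_minimal g ->
  right_minimal f.
Proof.
move=> artL IB indA gmin h fh.
have h_stable a : f (h (g a)) = 0 by rewrite fh short_exact_comp.
have [//|[h' _ hh'K]] := stable_end_local_of_left_minimal artL IB indA gmin h_stable.
exfalso; have [z /eqP[]] := nonsplit_target_neq0.
by have [b <-] := gf_exact.2.1 z; rewrite -[b]hh'K /= linearB fh subrr.
Qed.

Lemma left_minimal_of_right_minimal :
  artin_algebra L -> projective_mod B -> indecomposable C -> right_minimal f ->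
  left_minimal g.
Proof.
move=> artL PB indC fmin h hg.
have h_stable a : f (h (g a)) = 0 by rewrite hg short_exact_comp.
have [//|[h' h'hK _]] := stable_end_local_of_right_minimal artL PB indC fmin h_stable.
exfalso; have [a /eqP[]] := nonsplit_source_neq0.
by apply: gf_exact.1; apply: (can_inj h'hK); rewrite /= !hg !subrr.
Qed.

Lemma indecomposable_target_of_left_minimal :
  artin_algebra L -> projective_mod B -> injective_mod B ->
  indecomposable A -> left_minimal g -> indecomposable C.
Proof.
move=> artL PB IB indA gmin; split; first exact: nonsplit_target_neq0.
move=> U V subU subV UV0 UV_span.
have [p pP] := exists_projection subU subV UV0 UV_span.
have [e fe] := lift_along_f p PB.
have e_stable a : f (e (g a)) = 0 by rewrite fe short_exact_comp linear0.
have [[e' _ ee'K]|[e' _ ee'K]] :=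
  stable_end_local_of_left_minimal artL IB indA gmin e_stable; [right|left].
  apply: projection_surj_trivial UV0 pP _ => z.
  by have [b <-] := gf_exact.2.1 z; exists (f (e' b)); rewrite -fe ee'K.
apply: projection_surj_trivial (fun z Vz Uz => UV0 z Uz Vz) (projection_compl pP) _ => z.
have [b <-] := gf_exact.2.1 z; exists (f (e' b)).
by rewrite -[in RHS](ee'K b) /= linearB fe.
Qed.

Lemma indecomposable_source_of_right_minimal :
  artin_algebra L -> projective_mod B -> injective_mod B ->
  indecomposable C -> right_minimal f -> indecomposable A.
Proof.
move=> artL PB IB indC fmin; split; first exact: nonsplit_source_neq0.
move=> U V subU subV UV0 UV_span.
have [p pP] := exists_projection subU subV UV0 UV_span.
have [e eg] := extend_along_g p IB.
have e_stable a : f (e (g a)) = 0 by rewrite eg short_exact_comp.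
have [[e' e'eK _]|[e' e'eK _]] :=
  stable_end_local_of_right_minimal artL PB indC fmin e_stable; [right|left].
  apply: projection_inj_trivial subV UV0 pP _ => x y /(congr1 g).
  by rewrite -!eg => /(can_inj e'eK); exact: gf_exact.1.
apply: projection_inj_trivial subU (fun x Vx Ux => UV0 x Ux Vx) (projection_compl pP) _.
move=> x y /(congr1 g); rewrite /= !linearB -!eg => /(can_inj e'eK).
exact: gf_exact.1.
Qed.

End ShortExactSequence.

Theorem lemma2p6 (L : pzRingType) (A B C : lmodType L)
  (g : {linear A -> B}) (f : {linear B -> C}) :
  artin_algebra L ->
  fin_gen A -> fin_gen B -> fin_gen C ->
  short_exact g f -> ~ splits g f ->
  projective_mod B -> injective_mod B ->
  (indecomposable A /\ left_minimal g <-> indecomposable C /\ right_minimal f).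
Proof.
move=> artL fgA fgB fgC gf_exact gf_nonsplit PB IB.
split=> [[indA gmin]|[indC fmin]]; split.
- exact: indecomposable_target_of_left_minimal gf_exact gf_nonsplit fgA fgB fgC
    artL PB IB indA gmin.
- exact: right_minimal_of_left_minimal gf_exact gf_nonsplit fgA fgB artL IB indA gmin.
- exact: indecomposable_source_of_right_minimal gf_exact gf_nonsplit fgA fgB fgC
    artL PB IB indC fmin.
- exact: left_minimal_of_right_minimal gf_exact gf_nonsplit fgB fgC artL PB indC fmin.
Qed.
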